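(* Let $k\geq 0$ and $p\geq 1$ be integers with $\log_e^{(k)}p\geq 1$, and let $f_k(p)$ be the minimum of $\mathrm{Tran}(T)$ over all $(k,p)$-trees $T$. Then $f_k(p)^{1/p}\leq 10\,\log_e^{(k)}p$.
   Context: A $(k,p)$-tree is a rooted plane tree (children of each node ordered left to right) with exactly $p$ leaves, in which every leaf is at distance exactly $k+1$ from the root (nodes at distance $i$ from the root are at level $i$, so leaves are at level $k+1$). For a rooted tree $T$, $\mathrm{Tran}(T)=\prod_{u\in V(T)}|r_u|!$, where $|r_u|$ is the number of children of $u$. $\log_e^{(k)}p$ is the $k$-fold iterated natural logarithm, $\log_e^{(0)}p=p$. *)

From Stdlib Require Import Reals List Arith.

Inductive tree : Type := Node : list tree -> tree.

Definition children (t : tree) : list tree := match t with Node cs => cs end.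

Fixpoint nleaves (t : tree) : nat :=
  match t with
  | Node nil => 1
  | Node cs =>
      (fix sumL (l : list tree) : nat :=
         match l with nil => 0 | c :: l' => (nleaves c + sumL l')%nat end) cs
  end.

Fixpoint tran (t : tree) : nat :=
  match t with
  | Node cs =>
      (fact (length cs) *
       (fix prodL (l : list tree) : nat :=
          match l with nil => 1 | c :: l' => (tran c * prodL l')%nat end) cs)%nat
  end.

Fixpoint leaves_at_depth (d : nat) (t : tree) : Prop :=
  match t with
  | Node cs =>
      match d with
      | O => cs = nil
      | S d' => cs <> nil /\
          (fix allL (l : list tree) : Prop :=
             match l with nil => True | c :: l' => leaves_at_depth d' c /\ allL l' end) cs
      end
  end.

Definition kp_tree (k p : nat) (t : tree) : Prop :=
  nleaves t = p /\ leaves_at_depth (S k) t.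

Definition is_fk (k p m : nat) : Prop :=
  (exists t, kp_tree k p t /\ tran t = m) /\
  (forall t, kp_tree k p t -> (m <= tran t)%nat).

Open Scope R_scope.

Definition iter_ln (k : nat) (x : R) : R := Nat.iter k ln x.

(* Write L = log^(k) p.  For a correction term b with 0 <= b <= 2.22 one builds, by
   induction on k, a (k,p)-tree with ln Tran <= p (ln L + b L); then
   f_k(p)^(1/p) <= L exp (b L) <= 10 L.  With y = log^(k+1) p, a (k+1,p)-tree is obtained
   either from a (k,p)-tree by giving every leaf one child, which keeps Tran, or from a
   (k,q)-tree with q ~ p / y by giving its leaves p / q children each, as evenly as
   possible, which by Stirling's formula costs about p ln y + O(q).  The step function
   beta is chosen so that on each interval of values of y one of the two constructions
   preserves the bound, and each interval is checked with elementary bounds on exp and ln. *)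

From Stdlib Require Import Reals Lia Lra Wf_nat Classical_Prop.
From Coquelicot Require Import Coquelicot.
From Stdlib Require Import List Arith.
Open Scope R_scope.

(** * Plane trees *)

Fixpoint sum_nleaves (ts : list tree) : nat :=
  match ts with nil => 0 | t :: ts' => nleaves t + sum_nleaves ts' end%nat.

Fixpoint prod_tran (ts : list tree) : nat :=
  match ts with nil => 1 | t :: ts' => tran t * prod_tran ts' end%nat.

Definition all_leaves_at_depth (d : nat) : list tree -> Prop :=
  fix all (ts : list tree) : Prop :=
    match ts with nil => True | t :: ts' => leaves_at_depth d t /\ all ts' end.

Lemma nleaves_Node ts : ts <> nil -> nleaves (Node ts) = sum_nleaves ts.
Proof. destruct ts; [congruence | reflexivity]. Qed.

Lemma tran_Node ts : tran (Node ts) = (fact (length ts) * prod_tran ts)%nat.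
Proof. reflexivity. Qed.

Lemma leaves_at_depth_Node d ts :
  leaves_at_depth (S d) (Node ts) <-> ts <> nil /\ all_leaves_at_depth d ts.
Proof. reflexivity. Qed.

Lemma tree_ind_Forall (P : tree -> Prop) :
  (forall ts, Forall P ts -> P (Node ts)) -> forall t, P t.
Proof.
  intros H. fix IH 1. intros [ts]. apply H.
  induction ts as [|t ts IHts]; constructor; [apply IH | exact IHts].
Qed.

Lemma tran_pos t : (1 <= tran t)%nat.
Proof.
  induction t as [ts IH] using tree_ind_Forall.
  rewrite tran_Node.
  assert (Hprod : (1 <= prod_tran ts)%nat).
  { induction IH as [|t ts Ht _ IHts]; simpl; nia. }
  pose proof (lt_O_fact (length ts)). nia.
Qed.

Definition prod_fact (cs : list nat) : nat := fold_right (fun c acc => fact c * acc)%nat 1%nat cs.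

Lemma prod_fact_app cs cs' : prod_fact (cs ++ cs') = (prod_fact cs * prod_fact cs')%nat.
Proof. induction cs as [|c cs IH]; simpl; [lia | rewrite IH; lia]. Qed.

Lemma prod_fact_repeat c n : prod_fact (repeat c n) = (fact c ^ n)%nat.
Proof. induction n as [|n IH]; simpl; [reflexivity | now rewrite IH]. Qed.

Lemma list_sum_repeat c n : list_sum (repeat c n) = (c * n)%nat.
Proof. induction n as [|n IH]; simpl; lia. Qed.

Definition leaf : tree := Node nil.

Definition star (c : nat) : tree := Node (repeat leaf c).

Lemma star_spec c : (1 <= c)%nat ->
  leaves_at_depth 1 (star c) /\ nleaves (star c) = c /\ tran (star c) = fact c.
Proof.
  intros Hc.
  assert (Hne : repeat leaf c <> nil) by (destruct c; [lia | discriminate]).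
  assert (Hsum : sum_nleaves (repeat leaf c) = c) by (clear; induction c; simpl; lia).
  assert (Hprod : prod_tran (repeat leaf c) = 1%nat) by (clear; induction c; simpl; lia).
  assert (Hall : all_leaves_at_depth 0 (repeat leaf c)) by (clear; induction c; simpl; auto).
  unfold star. rewrite leaves_at_depth_Node, nleaves_Node, tran_Node, repeat_length, Hsum, Hprod
    by exact Hne.
  repeat split; auto with arith.
Qed.

(* [t'] hangs [c_i] new leaves below the [i]-th leaf of [t]. *)
Lemma graft_leaves t : forall d cs,
  leaves_at_depth d t -> length cs = nleaves t -> Forall (fun c => 1 <= c)%nat cs ->
  exists t', leaves_at_depth (S d) t' /\ nleaves t' = list_sum cs /\
             tran t' = (tran t * prod_fact cs)%nat.
Proof.
  induction t as [ts IH] using tree_ind_Forall. intros [|d] cs Hd Hlen Hpos.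
  - simpl in Hd. subst ts.
    destruct cs as [|c [|c' cs]]; simpl in Hlen; try discriminate.
    inversion_clear Hpos as [|? ? Hc _].
    destruct (star_spec c Hc) as (H1 & H2 & H3).
    exists (star c). rewrite H2, H3. split; [exact H1 | simpl; lia].
  - apply leaves_at_depth_Node in Hd as [Hne Hall].
    rewrite nleaves_Node in Hlen by exact Hne.
    assert (Hlist : exists ts', length ts' = length ts /\ all_leaves_at_depth (S d) ts' /\
              sum_nleaves ts' = list_sum cs /\ prod_tran ts' = (prod_tran ts * prod_fact cs)%nat).
    { clear Hne. revert cs Hall Hlen Hpos.
      induction IH as [|t ts Ht _ IHts]; intros cs Hall Hlen Hpos.
      - destruct cs; [|discriminate]. now exists nil.
      - destruct Hall as [Htd Hall]. simpl in Hlen.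
        rewrite <- (firstn_skipn (nleaves t) cs) in Hpos.
        apply Forall_app in Hpos as [Hpos1 Hpos2].
        destruct (Ht d (firstn (nleaves t) cs) Htd) as (t' & Ht'd & Ht'n & Ht't);
          [rewrite length_firstn; lia | exact Hpos1 |].
        destruct (IHts (skipn (nleaves t) cs) Hall) as (ts' & Hl & Hts'd & Hts'n & Hts't);
          [rewrite length_skipn; lia | exact Hpos2 |].
        exists (t' :: ts'). simpl. repeat split; auto.
        + rewrite Ht'n, Hts'n, <- list_sum_app, firstn_skipn. reflexivity.
        + rewrite Ht't, Hts't, <- (firstn_skipn (nleaves t) cs), prod_fact_app,
            firstn_skipn. lia. }
    destruct Hlist as (ts' & Hl & Hall' & Hsum & Hprod).
    assert (Hne' : ts' <> nil) by (intros ->; destruct ts; simpl in Hl; congruence).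
    exists (Node ts'). rewrite leaves_at_depth_Node, nleaves_Node, !tran_Node, Hl, Hprod
      by exact Hne'.
    repeat split; auto. lia.
Qed.

Lemma kp_tree_star p : (1 <= p)%nat -> kp_tree 0 p (star p) /\ tran (star p) = fact p.
Proof. intros Hp. destruct (star_spec p Hp) as (H1 & H2 & H3). exact (conj (conj H2 H1) H3). Qed.

Lemma kp_tree_lift k p t : kp_tree k p t -> exists t', kp_tree (S k) p t' /\ tran t' = tran t.
Proof.
  intros [Hn Hd].
  destruct (graft_leaves t (S k) (repeat 1%nat p) Hd) as (t' & Hd' & Hn' & Ht').
  - now rewrite repeat_length.
  - apply Forall_forall. intros c Hc. apply repeat_spec in Hc. lia.
  - rewrite list_sum_repeat in Hn'. rewrite prod_fact_repeat, Nat.pow_1_l in Ht'.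
    exists t'. repeat split; auto; lia.
Qed.

(* The cost of giving [q] parents [p] children as evenly as possible:
   [p mod q] of them get [p / q + 1] children, the others [p / q]. *)
Definition spread_cost (p q : nat) : nat :=
  (fact (p / q + 1) ^ (p mod q) * fact (p / q) ^ (q - p mod q))%nat.

Lemma kp_tree_spread k p q t : (1 <= q <= p)%nat -> kp_tree k q t ->
  exists t', kp_tree (S k) p t' /\ tran t' = (tran t * spread_cost p q)%nat.
Proof.
  intros Hq [Hn Hd].
  pose proof (Nat.div_mod p q ltac:(lia)) as Hdiv.
  pose proof (Nat.mod_upper_bound p q ltac:(lia)) as Hmod.
  assert (Ha : (1 <= p / q)%nat) by (apply Nat.div_le_lower_bound; lia).
  set (cs := repeat (p / q + 1)%nat (p mod q) ++ repeat (p / q)%nat (q - p mod q)).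
  destruct (graft_leaves t (S k) cs Hd) as (t' & Hd' & Hn' & Ht').
  - unfold cs. rewrite length_app, !repeat_length. lia.
  - apply Forall_forall. intros c Hc.
    apply in_app_or in Hc as [Hc | Hc]; apply repeat_spec in Hc; lia.
  - exists t'. repeat split; auto.
    + unfold cs in Hn'. rewrite Hn', list_sum_app, !list_sum_repeat. nia.
    + unfold cs in Ht'. rewrite Ht', prod_fact_app, !prod_fact_repeat. reflexivity.
Qed.

Lemma spread_cost_pos p q : (1 <= spread_cost p q)%nat.
Proof.
  unfold spread_cost.
  pose proof (lt_O_fact (p / q + 1)). pose proof (lt_O_fact (p / q)).
  pose proof (Nat.pow_nonzero (fact (p / q + 1)) (p mod q) ltac:(lia)).
  pose proof (Nat.pow_nonzero (fact (p / q)) (q - p mod q) ltac:(lia)).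
  nia.
Qed.

Lemma is_fk_exists k p t : kp_tree k p t -> exists m, is_fk k p m /\ (m <= tran t)%nat.
Proof.
  intros Ht.
  destruct (dec_inh_nat_subset_has_unique_least_element
              (fun n => exists t, kp_tree k p t /\ tran t = n)) as (m & [Hm Hmin] & _).
  - intros n. apply classic.
  - now exists (tran t), t.
  - exists m. split; [split|].
    + exact Hm.
    + intros t' Ht'. apply Hmin. now exists t'.
    + apply Hmin. now exists t.
Qed.

(** * Estimates for exp, ln and factorials *)

Lemma INR_ge_1 n : (1 <= n)%nat -> 1 <= INR n.
Proof. intros Hn. apply (le_INR 1 n Hn). Qed.

Lemma exp_le_compat a c : a <= c -> exp a <= exp c.
Proof. intros [Hlt | ->]; [left; now apply exp_increasing | lra]. Qed.

Lemma ln_nonneg x : 1 <= x -> 0 <= ln x.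
Proof. intros Hx. rewrite <- ln_1. apply ln_le; lra. Qed.

Lemma ln_le_sub_1 x : 0 < x -> ln x <= x - 1.
Proof. intros Hx. pose proof (exp_ineq1_le (ln x)) as H. rewrite exp_ln in H by exact Hx. lra. Qed.

Lemma ln_succ_le w : 0 < w -> ln (w + 1) <= ln w + / w.
Proof.
  intros Hw.
  pose proof (ln_le_sub_1 ((w + 1) / w) ltac:(apply Rdiv_lt_0_compat; lra)) as H.
  rewrite ln_div in H by lra.
  replace ((w + 1) / w - 1) with (/ w) in H by (field; lra). lra.
Qed.

Lemma ln_ge_ratio x : 1 <= x -> 2 * (x - 1) / (x + 1) <= ln x.
Proof.
  intros Hx. destruct (Req_dec x 1) as [-> | Hx1]; [rewrite ln_1; lra |].
  set (f t := ln t - 2 * (t - 1) / (t + 1)).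
  assert (Hf' : forall t, 0 < t -> is_derive f t (/ t - 4 / (t + 1) ^ 2)).
  { intros t Ht. unfold f. auto_derive; [repeat split; lra | field; lra]. }
  destruct (MVT_gen f 1 x (fun t => / t - 4 / (t + 1) ^ 2)) as (c & Hc & Heq).
  - intros t Ht. rewrite Rmin_left in Ht by lra. apply Hf'. lra.
  - intros t Ht. rewrite Rmin_left in Ht by lra. apply continuity_pt_filterlim.
    apply (ex_derive_continuous f). eexists. apply Hf'. lra.
  - rewrite Rmin_left, Rmax_right in Hc by lra.
    assert (Hslope : 0 <= / c - 4 / (c + 1) ^ 2).
    { replace (/ c - 4 / (c + 1) ^ 2) with ((c - 1) ^ 2 / (c * (c + 1) ^ 2)) by (field; lra).
      apply Rdiv_le_0_compat; [nra | apply Rmult_lt_0_compat; nra]. }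
    unfold f in Heq. rewrite ln_1 in Heq.
    assert (0 <= (/ c - 4 / (c + 1) ^ 2) * (x - 1)) by nra.
    replace (2 * (1 - 1) / (1 + 1)) with 0 in Heq by field. lra.
Qed.

(* [ln(1 + 1/m) >= 2/(2m + 1)] makes the step [m -> m + 1] go through. *)
Lemma ln_fact_le_stirling n : (1 <= n)%nat ->
  ln (INR (fact n)) <= INR n * ln (INR n) - INR n + 1 + ln (INR n) / 2.
Proof.
  induction n as [|n IH]; intros Hn; [lia |].
  destruct (Nat.eq_dec n 0) as [-> | Hn0].
  { simpl. rewrite ln_1. lra. }
  specialize (IH ltac:(lia)).
  pose proof (INR_ge_1 n ltac:(lia)) as Hm.
  rewrite fact_simpl, mult_INR, ln_mult, S_INR by (apply lt_0_INR; try apply lt_O_fact; lia).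
  set (m := INR n) in *.
  assert (Hratio : 2 / (2 * m + 1) <= ln (m + 1) - ln m).
  { pose proof (ln_ge_ratio ((m + 1) / m)) as H.
    rewrite ln_div in H by lra.
    replace (2 * ((m + 1) / m - 1) / ((m + 1) / m + 1)) with (2 / (2 * m + 1)) in H
      by (field; lra).
    apply H. apply (Rmult_le_reg_r m); [lra |]. field_simplify; lra. }
  assert (Hstep : 1 <= (m + / 2) * (ln (m + 1) - ln m)).
  { apply Rle_trans with ((m + / 2) * (2 / (2 * m + 1))); [right; field; lra |].
    apply Rmult_le_compat_l; lra. }
  nra.
Qed.

Lemma ln_fact_le n : (1 <= n)%nat -> ln (INR (fact n)) <= INR n * ln (INR n).
Proof.
  intros Hn. pose proof (ln_fact_le_stirling n Hn).
  pose proof (INR_ge_1 n Hn). pose proof (ln_le_sub_1 (INR n) ltac:(lra)). lra.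
Qed.

Lemma ln_fact_le_at n u : (1 <= n)%nat -> INR n <= u ->
  ln (INR (fact n)) <= INR n * ln u - INR n + 1 + ln u / 2.
Proof.
  intros Hn Hu. pose proof (ln_fact_le_stirling n Hn). pose proof (INR_ge_1 n Hn).
  assert (ln (INR n) <= ln u) by (apply ln_le; lra).
  assert (INR n * ln (INR n) <= INR n * ln u) by (apply Rmult_le_compat_l; lra).
  lra.
Qed.

Lemma ln_spread_cost_le_ratio p q : (1 <= q <= p)%nat ->
  ln (INR (spread_cost p q)) <=
  INR p * (ln (INR p / INR q + 1) - 1) + INR q + INR q / 2 * ln (INR p / INR q + 1).
Proof.
  intros Hq.
  pose proof (Nat.div_mod p q ltac:(lia)) as Hdiv.
  pose proof (Nat.mod_upper_bound p q ltac:(lia)) as Hmod.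
  assert (Ha : (1 <= p / q)%nat) by (apply Nat.div_le_lower_bound; lia).
  unfold spread_cost. set (a := (p / q)%nat) in *. set (r := (p mod q)%nat) in *.
  pose proof (INR_ge_1 q ltac:(lia)). pose proof (INR_ge_1 a Ha).
  assert (HpR : INR p = INR q * INR a + INR r) by (rewrite Hdiv, plus_INR, mult_INR; reflexivity).
  assert (HrR : INR r + 1 <= INR q) by (rewrite <- S_INR; apply le_INR; lia).
  pose proof (pos_INR r).
  set (u := INR p / INR q + 1).
  assert (Hau : INR a + 1 <= u) by (unfold u; apply Rplus_le_compat_r, Rle_div_r; nra).
  assert (Hfa : ln (INR (fact a)) <= INR a * ln u - INR a + 1 + ln u / 2)
    by (apply ln_fact_le_at; [exact Ha | lra]).
  assert (Hfa1 : ln (INR (fact (a + 1))) <= (INR a + 1) * ln u - (INR a + 1) + 1 + ln u / 2)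
    by (replace (INR a + 1) with (INR (a + 1)) by (now rewrite plus_INR);
        apply ln_fact_le_at; [lia | rewrite plus_INR; simpl; lra]).
  rewrite mult_INR, !pow_INR, ln_mult, !ln_pow, minus_INR
    by (try apply pow_lt; try apply lt_0_INR, lt_O_fact; lia).
  assert (INR r * ln (INR (fact (a + 1))) <=
          INR r * ((INR a + 1) * ln u - (INR a + 1) + 1 + ln u / 2))
    by (apply Rmult_le_compat_l; lra).
  assert ((INR q - INR r) * ln (INR (fact a)) <=
          (INR q - INR r) * (INR a * ln u - INR a + 1 + ln u / 2))
    by (apply Rmult_le_compat_l; lra).
  rewrite HpR. nra.
Qed.

Lemma ln_spread_cost_le p q y : (1 <= q <= p)%nat -> INR p / INR q <= y ->
  ln (INR (spread_cost p q)) <= INR p * ln y - INR p + 2 * INR q + INR q / 2 * ln (y + 1).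
Proof.
  intros Hq Hy. pose proof (ln_spread_cost_le_ratio p q Hq).
  pose proof (INR_ge_1 q ltac:(lia)). pose proof (INR_ge_1 p ltac:(lia)).
  set (w := INR p / INR q) in *.
  assert (Hw : 0 < w) by (apply Rdiv_lt_0_compat; lra).
  assert (Hlnw : ln (w + 1) <= ln y + INR q / INR p).
  { pose proof (ln_succ_le w Hw). assert (ln w <= ln y) by (apply ln_le; lra).
    replace (/ w) with (INR q / INR p) in * by (unfold w; field; lra). lra. }
  assert (INR p * ln (w + 1) <= INR p * ln y + INR q).
  { replace (INR p * ln y + INR q) with (INR p * (ln y + INR q / INR p)) by (field; lra).
    apply Rmult_le_compat_l; lra. }
  assert (INR q / 2 * ln (w + 1) <= INR q / 2 * ln (y + 1))
    by (apply Rmult_le_compat_l; [lra | apply ln_le; lra]).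
  lra.
Qed.

Lemma exp_pow s n : exp s ^ n = exp (INR n * s).
Proof.
  induction n as [|n IH]; simpl pow; [now rewrite Rmult_0_l, exp_0 |].
  rewrite IH, S_INR, <- exp_plus. f_equal. ring.
Qed.

Lemma exp_le_inv_1_sub s : s < 1 -> exp s <= / (1 - s).
Proof.
  intros Hs. pose proof (exp_ineq1_le (- s)).
  rewrite <- (Rinv_inv (exp s)), <- exp_Ropp. apply Rinv_le_contravar; lra.
Qed.

(* Both bounds come from [exp s = exp (s / n) ^ n] with [n] a power of two, where
   [1 + s / n <= exp (s / n) <= 1 / (1 - s / n)]. *)
Lemma exp_1_ge : 2.7129 <= exp 1.
Proof.
  replace 1 with (INR 256 * (1 / 256)) by (rewrite INR_IZR_INZ; simpl; lra).
  rewrite <- exp_pow. apply Rle_trans with ((1 + 1 / 256) ^ 256); [lra |].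
  apply pow_incr. pose proof (exp_ineq1_le (1 / 256)). lra.
Qed.

Lemma exp_222_le : exp 2.22 <= 10.
Proof.
  replace 2.22 with (INR 64 * (2.22 / 64)) by (rewrite INR_IZR_INZ; simpl; lra).
  rewrite <- exp_pow. apply Rle_trans with ((/ (1 - 2.22 / 64)) ^ 64); [| lra].
  apply pow_incr. pose proof (exp_pos (2.22 / 64)). pose proof (exp_le_inv_1_sub (2.22 / 64)). lra.
Qed.

Lemma exp_INR_ge m : 2.7129 ^ m <= exp (INR m).
Proof. rewrite <- (Rmult_1_r (INR m)), <- exp_pow. apply pow_incr. pose proof exp_1_ge. lra. Qed.

Lemma exp_ge_anchor m x E : INR m <= x -> E <= 2.7129 ^ m * (1 + (x - INR m)) -> E <= exp x.
Proof.
  intros Hm HE. replace x with (INR m + (x - INR m)) by ring. rewrite exp_plus.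
  pose proof (exp_INR_ge m). pose proof (exp_ineq1_le (x - INR m)).
  pose proof (pow_lt 2.7129 m ltac:(lra)).
  apply Rle_trans with (1 := HE). apply Rmult_le_compat; lra.
Qed.

Lemma ln_le_anchor m t U : 0 < t -> INR m - 1 + t / 2.7129 ^ m <= U -> ln t <= U.
Proof.
  intros Ht HU. pose proof (exp_INR_ge m) as Hm. pose proof (pow_lt 2.7129 m ltac:(lra)).
  pose proof (ln_le_sub_1 (t / exp (INR m)) ltac:(apply Rdiv_lt_0_compat; [lra | apply exp_pos]))
    as Hln.
  rewrite ln_div, ln_exp in Hln by (try apply exp_pos; lra).
  assert (t / exp (INR m) <= t / 2.7129 ^ m)
    by (apply Rmult_le_compat_l; [lra | apply Rinv_le_contravar; lra]).
  lra.
Qed.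

Ltac exp_lower_bound :=
  let anchor m := apply (exp_ge_anchor m); simpl INR; lra in
  first [anchor 8%nat | anchor 5%nat | anchor 4%nat | anchor 3%nat | anchor 2%nat
        | anchor 1%nat].

Ltac ln_upper_bound :=
  let anchor m := apply (ln_le_anchor m); simpl INR; lra in
  first [anchor 1%nat | anchor 2%nat | anchor 3%nat | anchor 4%nat | anchor 5%nat].

Lemma iter_ln_S k x : iter_ln (S k) x = ln (iter_ln k x).
Proof. reflexivity. Qed.

(* Stdlib's [ln] is [0] on nonpositive arguments, so [1 <= ln v] forces [0 < v]. *)
Lemma exp_1_le_of_ln_ge_1 v : 1 <= ln v -> 0 < v /\ exp 1 <= v.
Proof.
  intros Hv.
  assert (Hpos : 0 < v).
  { destruct (Rlt_dec 0 v) as [H | H]; [exact H |].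
    unfold ln in Hv. destruct (Rlt_dec 0 v); [contradiction | lra]. }
  split; [exact Hpos |]. rewrite <- (exp_ln v) by exact Hpos. now apply exp_le_compat.
Qed.

Lemma iter_ln_antitone k x :
  1 <= iter_ln k x -> forall j, (j <= k)%nat -> iter_ln k x <= iter_ln j x.
Proof.
  induction k as [|k IH]; intros Hk j Hj.
  - replace j with 0%nat by lia. lra.
  - destruct (Nat.eq_dec j (S k)) as [-> | Hne]; [lra |].
    rewrite iter_ln_S in *. destruct (exp_1_le_of_ln_ge_1 _ Hk) as [Hpos He].
    pose proof exp_1_ge. pose proof (ln_le_sub_1 _ Hpos).
    specialize (IH ltac:(lra) j ltac:(lia)). lra.
Qed.

Lemma exp_iter_ln_le k x : (1 <= k)%nat -> 1 <= iter_ln k x -> exp (iter_ln k x) <= x.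
Proof.
  intros Hk Hx. destruct k as [|k]; [lia |]. rewrite iter_ln_S in *.
  destruct (exp_1_le_of_ln_ge_1 _ Hx) as [Hpos He]. rewrite exp_ln by exact Hpos.
  pose proof exp_1_ge. apply (iter_ln_antitone k x ltac:(lra) 0). lia.
Qed.

Lemma ln_sub_ge a d : 0 <= d -> 1 <= a - d -> ln a - d <= ln (a - d).
Proof.
  intros Hd Had.
  pose proof (ln_le_sub_1 (a / (a - d)) ltac:(apply Rdiv_lt_0_compat; lra)) as H.
  rewrite ln_div in H by lra.
  replace (a / (a - d) - 1) with (d / (a - d)) in H by (field; lra).
  assert (d / (a - d) <= d).
  { apply (Rmult_le_reg_r (a - d)); [lra |]. field_simplify; nra. }
  lra.
Qed.

Lemma iter_ln_div_ge k x y q : (1 <= k)%nat -> 1 <= y -> x / y <= q <= x ->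
  1 + ln y <= iter_ln k x -> iter_ln k x - ln y <= iter_ln k q /\ iter_ln k q <= iter_ln k x.
Proof.
  intros Hk Hy Hq Hx. pose proof (ln_nonneg y Hy) as Hly.
  induction k as [|k IH]; [lia |].
  pose proof (iter_ln_antitone (S k) x ltac:(lra) k ltac:(lia)) as Hkx.
  destruct (Nat.eq_dec k 0) as [-> | Hk0].
  - simpl in *. assert (Hxy : 0 < x / y) by (apply Rdiv_lt_0_compat; lra).
    rewrite <- ln_div by lra. split; apply ln_le; lra.
  - destruct (IH ltac:(lia) ltac:(lra)) as [Hlo Hhi].
    rewrite !iter_ln_S in *. split.
    + eapply Rle_trans; [apply ln_sub_ge; lra | apply ln_le; lra].
    + apply ln_le; lra.
Qed.

(** * The inductive construction *)

Definition tree_bound (b : R -> R) (k : nat) : Prop :=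
  forall p : nat, (1 <= p)%nat -> 1 <= iter_ln k (INR p) ->
  exists t, kp_tree k p t /\
    ln (INR (tran t)) <= INR p * (ln (iter_ln k (INR p)) + b (iter_ln k (INR p))).

(* Conditions on [b] at [y = log^(k+1) p], so that [log^(k) p = exp y].  A lift gives
   every leaf of a (k,p)-tree one child; a spread hangs [p] new leaves as evenly as
   possible below the leaves of a (k,q)-tree with [q ~ p / y], where [z] stands for
   [log^(k) q] and [P] for [p].  Each condition says that the construction keeps
   [ln Tran <= p (ln y + b y)]; the [1] variants are for [k = 0], where the (0,q)-tree
   is a star. *)
Definition lift1_ok (b : R -> R) (y : R) : Prop := y <= ln y + b y.

Definition spread1_ok (b : R -> R) (y : R) : Prop :=
  let Q := exp y / y + 1 in
  Q * (ln Q + 1 + ln (y + 1) / 2) + 1 + ln Q / 2 <= exp y * (1 + b y).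

Definition lift_ok (b : R -> R) (y : R) : Prop := y + b (exp y) <= ln y + b y.

Definition spread_ok (b : R -> R) (y : R) : Prop :=
  forall z P, exp y - ln y <= z -> exp (exp y) <= P ->
  let r := b z + 2 + ln (y + 1) / 2 in r / y + (y + r) / P <= b y.

Lemma exists_parent_count p y : (1 <= p)%nat -> 1 <= y ->
  exists q : nat, (1 <= q <= p)%nat /\ INR p / y <= INR q <= INR p / y + 1 /\
                  INR p / INR q <= y.
Proof.
  intros Hp Hy. pose proof (INR_ge_1 p Hp).
  assert (Hx : 0 < INR p / y) by (apply Rdiv_lt_0_compat; lra).
  assert (Hxp : INR p / y <= INR p).
  { apply (Rmult_le_reg_r y); [lra |]. field_simplify; nra. }
  destruct (nfloor1_ex (INR p / y) Hx) as [n Hn].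
  assert (n < p)%nat by (apply INR_lt; lra).
  exists (S n). rewrite S_INR. repeat split; try lia; try lra.
  apply Rle_div_l; [lra |]. destruct Hn as [_ Hn]. apply Rle_div_l in Hn; lra.
Qed.

Lemma spread_step_le p q y z bz c T C :
  1 <= y -> 1 <= p -> 0 <= bz -> 0 <= q <= p / y + 1 -> ln z <= y ->
  T <= q * (ln z + bz) -> C <= p * ln y - p + 2 * q + q / 2 * ln (y + 1) ->
  (bz + 2 + ln (y + 1) / 2) / y + (y + (bz + 2 + ln (y + 1) / 2)) / p <= c ->
  T + C <= p * (ln y + c).
Proof.
  intros Hy Hp Hbz Hq Hz HT HC Hc. pose proof (ln_nonneg (y + 1) ltac:(lra)).
  set (r := bz + 2 + ln (y + 1) / 2) in *.
  assert (Hr : 0 <= r) by (unfold r; lra).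
  assert (Hqr : q * (y + r) <= (p / y + 1) * (y + r)) by (apply Rmult_le_compat_r; lra).
  assert (E : (p / y + 1) * (y + r) = p * (r / y + (y + r) / p) + p) by (field; lra).
  assert (p * (r / y + (y + r) / p) <= p * c) by (apply Rmult_le_compat_l; lra).
  assert (q * (ln z + bz) <= q * y + q * bz) by nra.
  unfold r in *. nra.
Qed.

Section TreeBound.

Variable b : R -> R.
Hypothesis b_nonneg : forall y, 0 <= b y.
Hypothesis lift1_or_spread1 : forall y, 1 <= y -> lift1_ok b y \/ spread1_ok b y.
Hypothesis lift_or_spread : forall y, 1 <= y -> lift_ok b y \/ spread_ok b y.

Lemma tree_bound_0 : tree_bound b 0.
Proof.
  intros p Hp _. destruct (kp_tree_star p Hp) as [Ht Htran].
  exists (star p). split; [exact Ht |]. rewrite Htran. simpl iter_ln.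
  pose proof (ln_fact_le p Hp). pose proof (b_nonneg (INR p)). pose proof (INR_ge_1 p Hp).
  nra.
Qed.

Lemma tree_bound_1 : tree_bound b 1.
Proof.
  intros p Hp Hy. simpl iter_ln in *. set (y := ln (INR p)) in *.
  pose proof (INR_ge_1 p Hp) as HpR.
  assert (Hpy : INR p = exp y) by (unfold y; rewrite exp_ln; lra).
  destruct (lift1_or_spread1 y Hy) as [Hlift | Hspread].
  - destruct (kp_tree_star p Hp) as [Ht0 Htran0].
    destruct (kp_tree_lift _ _ _ Ht0) as (t & Ht & Htran).
    exists t. split; [exact Ht |]. rewrite Htran, Htran0.
    pose proof (ln_fact_le p Hp) as Hfact. unfold lift1_ok in Hlift. fold y in Hfact. nra.
  - destruct (exists_parent_count p y Hp Hy) as (q & Hq & [Hqlo Hqhi] & Hpq).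
    destruct (kp_tree_star q ltac:(lia)) as [Ht0 Htran0].
    destruct (kp_tree_spread 0 p q _ Hq Ht0) as (t & Ht & Htran).
    exists t. split; [exact Ht |].
    rewrite Htran, Htran0, mult_INR, ln_mult
      by (apply lt_0_INR; try apply lt_O_fact; pose proof (spread_cost_pos p q); lia).
    pose proof (INR_ge_1 q ltac:(lia)) as HqR.
    pose proof (ln_spread_cost_le p q y Hq Hpq) as Hcost.
    pose proof (ln_fact_le_stirling q ltac:(lia)) as Hfact.
    unfold spread1_ok in Hspread. rewrite <- Hpy in Hspread.
    set (Q := INR p / y + 1) in *.
    assert (Hlq : ln (INR q) <= ln Q) by (apply ln_le; lra).
    pose proof (ln_nonneg (INR q) HqR). pose proof (ln_nonneg (y + 1) ltac:(lra)).
    assert (INR q * ln (INR q) <= Q * ln Q).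
    { apply Rle_trans with (INR q * ln Q);
        [apply Rmult_le_compat_l | apply Rmult_le_compat_r]; lra. }
    assert (INR q * (1 + ln (y + 1) / 2) <= Q * (1 + ln (y + 1) / 2))
      by (apply Rmult_le_compat_r; lra).
    pose proof (b_nonneg y). nra.
Qed.

Lemma tree_bound_S k : (1 <= k)%nat -> tree_bound b k -> tree_bound b (S k).
Proof.
  intros Hk IH p Hp Hy. rewrite iter_ln_S in *.
  set (L := iter_ln k (INR p)) in *. set (y := ln L) in *.
  destruct (exp_1_le_of_ln_ge_1 L Hy) as [HL0 HLe].
  pose proof exp_1_ge. pose proof (INR_ge_1 p Hp) as HpR.
  assert (HLy : L = exp y) by (unfold y; now rewrite exp_ln).
  destruct (lift_or_spread y Hy) as [Hlift | Hspread].
  - destruct (IH p Hp ltac:(fold L; lra)) as (t0 & Ht0 & Hbound0). fold L y in Hbound0.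
    destruct (kp_tree_lift _ _ _ Ht0) as (t & Ht & Htran).
    exists t. split; [exact Ht |]. rewrite Htran.
    unfold lift_ok in Hlift. rewrite <- HLy in Hlift.
    apply Rle_trans with (1 := Hbound0). apply Rmult_le_compat_l; lra.
  - destruct (exists_parent_count p y Hp Hy) as (q & Hq & [Hqlo Hqhi] & Hpq).
    pose proof (ln_le_sub_1 y ltac:(lra)). pose proof (ln_nonneg y Hy).
    pose proof (exp_ineq1_le y).
    destruct (iter_ln_div_ge k (INR p) y (INR q) Hk Hy) as [Hzlo Hzhi];
      [split; [lra | apply le_INR; lia] | fold L; lra |].
    fold L in Hzlo, Hzhi. set (z := iter_ln k (INR q)) in *.
    destruct (IH q ltac:(lia) ltac:(fold z; lra)) as (t0 & Ht0 & Hbound0). fold z in Hbound0.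
    destruct (kp_tree_spread k p q t0 Hq Ht0) as (t & Ht & Htran).
    exists t. split; [exact Ht |].
    rewrite Htran, mult_INR, ln_mult
      by (apply lt_0_INR; pose proof (tran_pos t0); pose proof (spread_cost_pos p q); lia).
    assert (Hpexp : exp (exp y) <= INR p)
      by (rewrite <- HLy; apply exp_iter_ln_le; [exact Hk | fold L; lra]).
    apply (spread_step_le (INR p) (INR q) y z (b z)).
    + exact Hy.
    + exact HpR.
    + apply b_nonneg.
    + pose proof (pos_INR q). lra.
    + unfold y. apply ln_le; lra.
    + exact Hbound0.
    + now apply ln_spread_cost_le.
    + apply Hspread; lra.
Qed.

Lemma tree_bound_all k : tree_bound b k.
Proof.
  induction k as [|[|k] IH].
  - exact tree_bound_0.
  - exact tree_bound_1.
  - apply tree_bound_S; [lia | exact IH].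
Qed.

End TreeBound.

Lemma root_le_of_ln_le m T p L c : 1 <= m <= T -> 1 <= p -> 0 < L -> c <= 2.22 ->
  ln T <= p * (ln L + c) -> Rpower m (1 / p) <= 10 * L.
Proof.
  intros Hm Hp HL Hc HT. unfold Rpower.
  assert (Hlm : ln m <= ln T) by (apply ln_le; lra).
  assert (Hexp : 1 / p * ln m <= ln L + c).
  { apply (Rmult_le_reg_l p); [lra |]. replace (p * (1 / p * ln m)) with (ln m) by (field; lra).
    lra. }
  apply Rle_trans with (exp (ln L + c)); [now apply exp_le_compat |].
  rewrite exp_plus, exp_ln by exact HL.
  pose proof (exp_le_compat _ _ Hc). pose proof exp_222_le. nra.
Qed.

(** * The correction term *)

(* On [lo <= y <= hi], [ln y] is bounded below by [2 (lo - 1) / (lo + 1)] and [exp y] by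
   [2.7129 lo]; the remaining numerical arguments bound [exp] and [ln] at the endpoints
   and are checked by [exp_lower_bound] and [ln_upper_bound]. *)
Section IntervalChecks.

Variable b : R -> R.

Lemma lift1_ok_on lo hi c y : 1 <= lo -> lo <= y <= hi -> c <= b y ->
  hi - 2 * (lo - 1) / (lo + 1) <= c -> lift1_ok b y.
Proof.
  intros Hlo Hy Hc Hn. unfold lift1_ok.
  pose proof (ln_ge_ratio lo Hlo). assert (ln lo <= ln y) by (apply ln_le; lra). lra.
Qed.

Lemma lift_ok_on lo hi cE c y : 1 <= lo -> lo <= y <= hi ->
  (forall x, 2.7129 * lo <= x -> b x <= cE) -> c <= b y ->
  hi - 2 * (lo - 1) / (lo + 1) + cE <= c -> lift_ok b y.
Proof.
  intros Hlo Hy HbE Hc Hn. unfold lift_ok.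
  pose proof (ln_ge_ratio lo Hlo). assert (ln lo <= ln y) by (apply ln_le; lra).
  assert (2.7129 * lo <= exp y) by (apply (exp_ge_anchor 1); simpl INR; lra).
  specialize (HbE (exp y) ltac:(lra)). lra.
Qed.

Lemma spread1_ok_of_le y : 1 <= y ->
  (1 + ln (y + 1) / 2 - ln y) / y
  + / exp y * (3 + 1.5 * y + 1.5 * y * / exp y + ln (y + 1) / 2) <= b y -> spread1_ok b y.
Proof.
  intros Hy Hb. unfold spread1_ok. cbv zeta.
  set (P := exp y) in *.
  assert (HP : 1 + y <= P) by apply exp_ineq1_le.
  set (e := / P) in *.
  assert (He : 0 < e) by (apply Rinv_0_lt_compat; lra).
  set (Q := P / y + 1).
  set (L := ln y) in *. set (M := ln (y + 1) / 2) in *.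
  assert (HL : 0 <= L) by (apply ln_nonneg; lra).
  assert (HM : 0 <= M) by (pose proof (ln_nonneg (y + 1) ltac:(lra)); unfold M; lra).
  set (G := y - L + y * e).
  assert (HG : ln Q <= G).
  { replace Q with ((P / y) * (1 + y * e)) by (unfold Q, e; field; lra).
    rewrite ln_mult, ln_div by (try apply Rdiv_lt_0_compat; nra).
    unfold P at 1. rewrite ln_exp.
    pose proof (ln_le_sub_1 (1 + y * e) ltac:(nra)). unfold G, L. lra. }
  assert (HQ1 : 1 <= Q) by (unfold Q; assert (0 < P / y) by (apply Rdiv_lt_0_compat; lra); lra).
  pose proof (ln_nonneg Q HQ1).
  assert (H1 : Q * (ln Q + 1 + M) <= Q * (G + 1 + M)) by (apply Rmult_le_compat_l; lra).
  assert (H2 : Q * (G + 1 + M) + 1 + G / 2 =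
     P * (1 + (1 + M - L) / y + e * (1 + y + y * e + 1 + M - L) + e * (1 + G / 2))).
  { unfold Q, G. field_simplify; [| lra | lra]. unfold e. field. lra. }
  assert (H3 : e * (1 + y + y * e + 1 + M - L) + e * (1 + G / 2)
               <= e * (3 + 1.5 * y + 1.5 * y * e + M)).
  { unfold G. assert (0 <= e * L) by nra. nra. }
  assert (P * (1 + (1 + M - L) / y + e * (1 + y + y * e + 1 + M - L) + e * (1 + G / 2))
          <= P * (1 + b y)).
  { apply Rmult_le_compat_l; lra. }
  lra.
Qed.

Lemma spread1_ok_on lo hi U E c y : 1 <= lo -> lo <= y <= hi -> ln (hi + 1) <= U ->
  E <= exp lo -> 0 < E -> c <= b y -> 0 <= 1 + U / 2 - 2 * (lo - 1) / (lo + 1) ->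
  (1 + U / 2 - 2 * (lo - 1) / (lo + 1)) / lo
  + / E * (3 + 1.5 * hi + 1.5 * hi * / E + U / 2) <= c -> spread1_ok b y.
Proof.
  intros Hlo Hy HU HE HE0 Hc HN Hn. apply spread1_ok_of_le; [lra |].
  pose proof (ln_ge_ratio lo Hlo).
  assert (ln lo <= ln y) by (apply ln_le; lra).
  assert (ln (y + 1) <= ln (hi + 1)) by (apply ln_le; lra).
  pose proof (ln_nonneg (y + 1) ltac:(lra)).
  assert (exp lo <= exp y) by (apply exp_le_compat; lra).
  assert (Hey : / exp y <= / E) by (apply Rinv_le_contravar; lra).
  assert (Hey0 : 0 < / exp y) by (apply Rinv_0_lt_compat, exp_pos).
  assert ((1 + ln (y + 1) / 2 - ln y) / y <= (1 + U / 2 - 2 * (lo - 1) / (lo + 1)) / lo).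
  { destruct (Rle_dec 0 (1 + ln (y + 1) / 2 - ln y)).
    - apply Rmult_le_compat; try lra;
        [apply Rlt_le, Rinv_0_lt_compat | apply Rinv_le_contravar]; lra.
    - apply Rle_trans with 0.
      + assert (0 < / y) by (apply Rinv_0_lt_compat; lra). unfold Rdiv. nra.
      + apply Rdiv_le_0_compat; lra. }
  assert (/ exp y * (3 + 1.5 * y + 1.5 * y * / exp y + ln (y + 1) / 2)
          <= / E * (3 + 1.5 * hi + 1.5 * hi * / E + U / 2)).
  { assert (y * / exp y <= hi * / E) by (apply Rmult_le_compat; lra).
    apply Rmult_le_compat; nra. }
  lra.
Qed.

Lemma spread_ok_on lo hi E U1 U2 Pmin cZ c y : 1 <= lo -> lo <= y <= hi ->
  E <= exp lo -> ln hi <= U1 -> ln (hi + 1) <= U2 -> Pmin <= exp E -> 0 < Pmin ->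
  (forall x, E - U1 <= x -> 0 <= b x <= cZ) -> c <= b y ->
  (cZ + 2 + U2 / 2) / lo + (hi + (cZ + 2 + U2 / 2)) / Pmin <= c -> spread_ok b y.
Proof.
  intros Hlo Hy HE HU1 HU2 HP HP0 HbZ Hc Hn z P Hz HPz. cbv zeta.
  assert (ln y <= ln hi) by (apply ln_le; lra).
  assert (exp lo <= exp y) by (apply exp_le_compat; lra).
  specialize (HbZ z ltac:(lra)).
  assert (ln (y + 1) <= ln (hi + 1)) by (apply ln_le; lra).
  assert (exp E <= exp (exp y)) by (apply exp_le_compat; lra).
  pose proof (ln_nonneg (y + 1) ltac:(lra)).
  set (r := b z + 2 + ln (y + 1) / 2). set (r' := cZ + 2 + U2 / 2).
  assert (Hr : 0 <= r <= r') by (unfold r, r'; lra).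
  assert (r / y <= r' / lo).
  { apply Rmult_le_compat; try lra;
      [apply Rlt_le, Rinv_0_lt_compat | apply Rinv_le_contravar]; lra. }
  assert ((y + r) / P <= (hi + r') / Pmin).
  { apply Rmult_le_compat; try lra;
      [apply Rlt_le, Rinv_0_lt_compat | apply Rinv_le_contravar]; lra. }
  unfold r' in *. lra.
Qed.

Lemma exp_ge_105_mul y : 30 <= y -> 105 * y <= exp y.
Proof.
  intros Hy. set (w := y / 4).
  assert (E : exp y = exp w ^ 4) by (rewrite exp_pow; f_equal; simpl INR; unfold w; lra).
  assert (Hw : 7.5 <= w) by (unfold w; lra).
  assert (w ^ 4 <= exp w ^ 4) by (apply pow_incr; pose proof (exp_ineq1_le w); lra).
  assert (7.5 ^ 3 <= w ^ 3) by (apply pow_incr; lra).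
  assert (w ^ 4 = w ^ 3 * w) by ring.
  assert (7.5 ^ 3 * w <= w ^ 3 * w) by (apply Rmult_le_compat_r; lra).
  unfold w in *. lra.
Qed.

Lemma spread_ok_tail y : 30 <= y -> (forall x, 30 <= x -> 0 <= b x <= 0.2) -> 0.2 <= b y ->
  spread_ok b y.
Proof.
  intros Hy Hb Hc z P Hz HP. cbv zeta.
  pose proof (exp_ge_105_mul y Hy).
  pose proof (ln_le_sub_1 y ltac:(lra)).
  specialize (Hb z ltac:(lra)).
  assert (exp y <= exp (exp y)) by (apply exp_le_compat; pose proof (exp_ineq1_le y); lra).
  assert (HU : ln (y + 1) <= 3 + (y + 1) / 2.7129 ^ 4) by (apply (ln_le_anchor 4); simpl INR; lra).
  pose proof (ln_nonneg (y + 1) ltac:(lra)).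
  set (r := b z + 2 + ln (y + 1) / 2).
  assert (Hr : 0 <= r <= 3.71 + y / 108) by (unfold r; lra).
  assert (r / y <= 3.71 / 30 + / 108).
  { apply (Rmult_le_reg_r y); [lra |]. unfold Rdiv. rewrite Rmult_assoc, Rinv_l by lra. nra. }
  assert ((y + r) / P <= 1.2 / 105).
  { apply (Rmult_le_reg_r P); [lra |]. unfold Rdiv. rewrite Rmult_assoc, Rinv_l by lra. nra. }
  lra.
Qed.

Lemma spread1_ok_tail y : 30 <= y -> 0.2 <= b y -> spread1_ok b y.
Proof.
  intros Hy Hc. apply spread1_ok_of_le; [lra |].
  pose proof (exp_ge_105_mul y Hy).
  pose proof (ln_le_sub_1 y ltac:(lra)). pose proof (ln_nonneg y ltac:(lra)).
  pose proof (ln_nonneg (y + 1) ltac:(lra)).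
  assert (HN : ln (y + 1) <= 2 * ln y - 2).
  { assert (Hsq : ln ((y + 1) * exp 2) <= ln (y * y)).
    { apply ln_le; [pose proof (exp_pos 2); nra |].
      pose proof (exp_le_compat _ _ (Rlt_le 2 2.22 ltac:(lra))). pose proof exp_222_le. nra. }
    rewrite ln_mult, ln_exp, ln_mult in Hsq by (try apply exp_pos; lra). lra. }
  assert ((1 + ln (y + 1) / 2 - ln y) / y <= 0).
  { apply Rmult_le_0_r; [lra | apply Rlt_le, Rinv_0_lt_compat; lra]. }
  set (e := / exp y).
  assert (He0 : 0 < e) by (apply Rinv_0_lt_compat, exp_pos).
  assert (Hee : e * exp y = 1) by (unfold e; field; apply Rgt_not_eq, exp_pos).
  assert (Hye : y * e <= / 105) by nra.
  assert (He : e <= / 3150) by nra.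
  assert (e * (ln (y + 1) / 2) <= e * y) by (apply Rmult_le_compat_l; lra).
  assert (e * (y * e) <= e) by nra.
  assert (e * (3 + 1.5 * y + 1.5 * y * e + ln (y + 1) / 2) <= 0.2) by nra.
  lra.
Qed.

End IntervalChecks.

Definition beta (y : R) : R :=
  if Rle_lt_dec 20 y then 0.2 else if Rle_lt_dec 15 y then 0.25
  else if Rle_lt_dec 10 y then 0.37 else if Rle_lt_dec 8 y then 0.44
  else if Rle_lt_dec 6 y then 0.56 else if Rle_lt_dec 5 y then 0.64
  else if Rle_lt_dec 4 y then 0.78 else if Rle_lt_dec 3.5 y then 0.88
  else if Rle_lt_dec 3 y then 1.03 else if Rle_lt_dec 2.7 y then 1.16
  else if Rle_lt_dec 2.5 y then 1.23 else if Rle_lt_dec 2.25 y then 1.38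
  else if Rle_lt_dec 2 y then 1.6 else if Rle_lt_dec 1.75 y then 1.97
  else if Rle_lt_dec 1.3 y then 2.07 else if Rle_lt_dec 1.15 y then 2.15
  else 2.22.

Ltac beta_cases :=
  intros; unfold beta;
  repeat match goal with |- context [Rle_lt_dec ?a ?x] => destruct (Rle_lt_dec a x) end;
  lra.

Ltac certify := first [lra | exp_lower_bound | ln_upper_bound | beta_cases].

Lemma beta_nonneg y : 0 <= beta y.
Proof. beta_cases. Qed.

Lemma beta_le y : beta y <= 2.22.
Proof. beta_cases. Qed.

Lemma beta_lift1_or_spread1 y : 1 <= y -> lift1_ok beta y \/ spread1_ok beta y.
Proof.
  intros Hy.
  destruct (Rle_lt_dec 30 y); [right; apply spread1_ok_tail; certify |].
  destruct (Rle_lt_dec 8 y); [right; apply (spread1_ok_on beta 8 30 3.5527 2930 0.2); certify |].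
  destruct (Rle_lt_dec 4 y); [right; apply (spread1_ok_on beta 4 8 2.2229 54.16 0.56); certify |].
  destruct (Rle_lt_dec 3 y); [right; apply (spread1_ok_on beta 3 4 1.6794 19.96 0.88); certify |].
  destruct (Rle_lt_dec 2.5 y);
    [right; apply (spread1_ok_on beta 2.5 3 1.4745 11.03 1.16); certify |].
  destruct (Rle_lt_dec 2.25 y);
    [right; apply (spread1_ok_on beta 2.25 2.5 1.2902 9.19 1.38); certify |].
  destruct (Rle_lt_dec 2 y); [left; apply (lift1_ok_on beta 2 2.25 1.6); certify |].
  destruct (Rle_lt_dec 1.75 y); [left; apply (lift1_ok_on beta 1.75 2 1.97); certify |].
  left; apply (lift1_ok_on beta 1 1.75 2.07); certify.
Qed.

Lemma beta_lift_or_spread y : 1 <= y -> lift_ok beta y \/ spread_ok beta y.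
Proof.
  intros Hy.
  destruct (Rle_lt_dec 30 y); [right; apply spread_ok_tail; certify |].
  destruct (Rle_lt_dec 20 y);
    [right; apply (spread_ok_on beta 20 30 2351.04 3.5026 3.5527 344874.05 0.2 0.2); certify |].
  destruct (Rle_lt_dec 15 y);
    [right; apply (spread_ok_on beta 15 20 1616.34 3.0018 3.0518 236917.23 0.2 0.25); certify |].
  destruct (Rle_lt_dec 10 y);
    [right; apply (spread_ok_on beta 10 15 881.64 2.7513 2.8014 128960.42 0.2 0.37); certify |].
  destruct (Rle_lt_dec 8 y);
    [right; apply (spread_ok_on beta 8 10 587.76 2.3588 2.4947 85777.69 0.2 0.44); certify |].
  destruct (Rle_lt_dec 6 y);
    [right; apply (spread_ok_on beta 6 8 293.88 2.087 2.2229 42594.96 0.2 0.56); certify |].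
  destruct (Rle_lt_dec 5 y);
    [right; apply (spread_ok_on beta 5 6 146.94 1.8153 1.9512 21003.6 0.2 0.64); certify |].
  destruct (Rle_lt_dec 4 y);
    [right; apply (spread_ok_on beta 4 5 54.16 1.6794 1.8153 7370.51 0.2 0.78); certify |].
  destruct (Rle_lt_dec 3.5 y);
    [right; apply (spread_ok_on beta 3.5 4 29.94 1.4745 1.6794 3811.62 0.2 0.88); certify |].
  destruct (Rle_lt_dec 3 y);
    [right; apply (spread_ok_on beta 3 3.5 19.96 1.2902 1.6115 2345.16 0.25 1.03); certify |].
  destruct (Rle_lt_dec 2.7 y);
    [right; apply (spread_ok_on beta 2.7 3 12.51 1.1059 1.4745 1250.45 0.37 1.16); certify |].
  destruct (Rle_lt_dec 2.5 y);
    [right; apply (spread_ok_on beta 2.5 2.7 11.03 0.9953 1.3639 1032.98 0.37 1.23); certify |].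
  destruct (Rle_lt_dec 2.25 y);
    [right; apply (spread_ok_on beta 2.25 2.5 9.19 0.9216 1.2902 762.61 0.44 1.38); certify |].
  destruct (Rle_lt_dec 2 y);
    [right; apply (spread_ok_on beta 2 2.25 7.35 0.8294 1.198 492.24 0.56 1.6); certify |].
  destruct (Rle_lt_dec 1.75 y);
    [right; apply (spread_ok_on beta 1.75 2 4.74 0.7373 1.1059 94.24 0.78 1.97); certify |].
  destruct (Rle_lt_dec 1.6 y); [left; apply (lift_ok_on beta 1.6 1.75 0.78 2.07); certify |].
  destruct (Rle_lt_dec 1.5 y); [left; apply (lift_ok_on beta 1.5 1.6 0.78 2.07); certify |].
  destruct (Rle_lt_dec 1.4 y); [left; apply (lift_ok_on beta 1.4 1.5 0.88 2.07); certify |].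
  destruct (Rle_lt_dec 1.3 y); [left; apply (lift_ok_on beta 1.3 1.4 0.88 2.07); certify |].
  destruct (Rle_lt_dec 1.2 y); [left; apply (lift_ok_on beta 1.2 1.3 1.03 2.15); certify |].
  destruct (Rle_lt_dec 1.15 y); [left; apply (lift_ok_on beta 1.15 1.2 1.03 2.15); certify |].
  destruct (Rle_lt_dec 1.1 y); [left; apply (lift_ok_on beta 1.1 1.15 1.16 2.22); certify |].
  destruct (Rle_lt_dec 1.05 y); [left; apply (lift_ok_on beta 1.05 1.1 1.16 2.22); certify |].
  left; apply (lift_ok_on beta 1 1.05 1.16 2.22); certify.
Qed.

Theorem lemma9p1 (k p : nat) (hp : (1 <= p)%nat) (hlog : 1 <= iter_ln k (INR p)) :
  exists m : nat, is_fk k p m /\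
    Rpower (INR m) (1 / INR p) <= 10 * iter_ln k (INR p).
Proof.
  destruct (tree_bound_all beta beta_nonneg beta_lift1_or_spread1 beta_lift_or_spread k p hp hlog)
    as (t & Ht & Hbound).
  destruct (is_fk_exists k p t Ht) as (m & Hfk & Hmt).
  assert (Hm : (1 <= m)%nat) by (destruct Hfk as [(tm & _ & <-) _]; apply tran_pos).
  exists m. split; [exact Hfk |].
  apply (root_le_of_ln_le _ (INR (tran t)) _ _ (beta (iter_ln k (INR p)))).
  - split; [now apply INR_ge_1 | now apply le_INR].
  - now apply INR_ge_1.
  - lra.
  - apply beta_le.
  - exact Hbound.
Qed.
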